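(* Let $\Gamma = \{(x,y) \in \mathbb{R}^2 : y^2 = x^3 - x^2,\ x \neq 0\} \cup \{O\} \subset \mathbb{RP}^2$, where $O$ is the point at infinity lying on all lines parallel to the $y$-axis (and on the line at infinity). Define $\phi : \mathbb{R}/\mathbb{Z} \to \Gamma$ by $\phi(0) = O$ and, for $x \neq 0$, $\phi(x) = \left(\cot(\pi x)^2 + 1,\ \cot(\pi x)(\cot(\pi x)^2 + 1)\right)$. Then $\phi$ is a well-defined bijection, and for any three distinct elements $x, y, z \in \mathbb{R}/\mathbb{Z}$, the points $\phi(x), \phi(y), \phi(z)$ are collinear in $\mathbb{RP}^2$ if and only if $x + y + z = 0$ in $\mathbb{R}/\mathbb{Z}$. *)

From Stdlib Require Import Reals Lra ZArith ClassicalDescription.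
Open Scope R_scope.

(* Points of RP^2 that can lie on Gamma: affine points (x,y) = [x:y:1],
   and the point O = [0:1:0] at infinity in the direction of the y-axis. *)
Inductive pt : Type :=
| Aff : R -> R -> pt
| O : pt.

Definition hX (p : pt) : R := match p with Aff x _ => x | O => 0 end.
Definition hY (p : pt) : R := match p with Aff _ y => y | O => 1 end.
Definition hZ (p : pt) : R := match p with Aff _ _ => 1 | O => 0 end.

Definition on_line (a b c : R) (p : pt) : Prop :=
  a * hX p + b * hY p + c * hZ p = 0.

Definition collinear (p q r : pt) : Prop :=
  exists a b c : R, ~ (a = 0 /\ b = 0 /\ c = 0) /\
    on_line a b c p /\ on_line a b c q /\ on_line a b c r.

Definition in_Gamma (p : pt) : Prop :=
  match p with
  | Aff x y => y ^ 2 = x ^ 3 - x ^ 2 /\ x <> 0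
  | O => True
  end.

(* R/Z is represented by R, with equality modulo integers *)
Definition eqZ (x y : R) : Prop := exists k : Z, x - y = IZR k.

Definition cot (t : R) : R := cos t / sin t.

Definition phi (x : R) : pt :=
  if excluded_middle_informative (exists k : Z, x = IZR k) then O
  else let c := cot (PI * x) in Aff (c ^ 2 + 1) (c * (c ^ 2 + 1)).

(* Writing t = cot(pi x), the point phi(x) is (t^2+1, t(t^2+1)), and the line
   aX + bY + cZ = 0 meets Gamma at the roots t of the cubic
   b t^3 + a t^2 + b t + (a + c).  Three distinct affine points are thus
   collinear iff t1 t2 + t1 t3 + t2 t3 = 1 (Vieta), and O lies on a line
   with two of them iff t2 + t3 = 0.  The addition formulas
   sin(a+b) = sin a sin b (cot a + cot b) and
   sin(a+b+c) = sin a sin b sin c (cot a cot b + cot a cot c + cot b cot c - 1)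
   turn these conditions into sin(pi (x+y+z)) = 0, i.e. x+y+z in Z. *)
From Stdlib Require Import Reals ZArith.
From Stdlib Require Import Lra Classical ClassicalDescription.
Open Scope R_scope.

Definition curve_pt (t : R) : pt := Aff (t ^ 2 + 1) (t * (t ^ 2 + 1)).

Lemma curve_pt_in_Gamma t : in_Gamma (curve_pt t).
Proof.
  split; [ring|].
  assert (0 <= t * t) by apply Rle_0_sqr. nra.
Qed.

Lemma curve_pt_inj t s : curve_pt t = curve_pt s -> t = s.
Proof.
  intro E. injection E as Ex Ey. rewrite Ex in Ey.
  assert (0 <= s * s) by apply Rle_0_sqr.
  apply (Rmult_eq_reg_r (s ^ 2 + 1)); nra.
Qed.

Lemma Gamma_curve_pt u v : in_Gamma (Aff u v) -> Aff u v = curve_pt (v / u).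
Proof.
  intros [Hc Hu]. set (t := v / u).
  assert (Hut : u = t ^ 2 + 1).
  { apply (Rmult_eq_reg_l (u ^ 2)); [|apply pow_nonzero; exact Hu].
    unfold t. field_simplify; [rewrite Hc; ring | exact Hu]. }
  assert (Hvt : v = t * u) by (unfold t; field; exact Hu).
  unfold curve_pt. rewrite Hvt, Hut. reflexivity.
Qed.

Lemma collinear_swap12 p q r : collinear p q r <-> collinear q p r.
Proof. split; intros (a & b & c & H); exists a, b, c; tauto. Qed.

Lemma collinear_swap23 p q r : collinear p q r <-> collinear p r q.
Proof. split; intros (a & b & c & H); exists a, b, c; tauto. Qed.

Lemma on_line_curve_pt a b c t :
  on_line a b c (curve_pt t) <-> b * t ^ 3 + a * t ^ 2 + b * t + (a + c) = 0.
Proof.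
  unfold on_line, curve_pt, hX, hY, hZ.
  replace (a * (t ^ 2 + 1) + b * (t * (t ^ 2 + 1)) + c * 1)
    with (b * t ^ 3 + a * t ^ 2 + b * t + (a + c)) by ring.
  reflexivity.
Qed.

Lemma collinear_curve_pt t1 t2 t3 : t1 <> t2 -> t1 <> t3 -> t2 <> t3 ->
  collinear (curve_pt t1) (curve_pt t2) (curve_pt t3) <->
  t1 * t2 + t1 * t3 + t2 * t3 = 1.
Proof.
  intros H12 H13 H23. split.
  - intros (a & b & c & Hn & E1 & E2 & E3).
    rewrite on_line_curve_pt in E1, E2, E3.
    pose (f t := b * t ^ 3 + a * t ^ 2 + b * t + (a + c)).
    change (f t1 = 0) in E1. change (f t2 = 0) in E2. change (f t3 = 0) in E3.
    set (D := (t1 - t2) * (t1 - t3) * (t2 - t3)).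
    assert (HD : D <> 0).
    { unfold D. repeat apply Rmult_integral_contrapositive_currified; lra. }
    (* second divided differences of the cubic f *)
    assert (K1 : D * (a + b * (t1 + t2 + t3)) = 0).
    { replace (D * (a + b * (t1 + t2 + t3)))
        with ((t1 - t3) * (f t1 - f t2) - (t1 - t2) * (f t1 - f t3))
        by (unfold f, D; ring).
      rewrite E1, E2, E3. ring. }
    assert (K2 : D * (b * (1 - (t1 * t2 + t1 * t3 + t2 * t3))) = 0).
    { replace (D * (b * (1 - (t1 * t2 + t1 * t3 + t2 * t3))))
        with ((t1 - t3) * (t2 - t3) * (f t1 - f t2)
              - (t1 + t2) * (D * (a + b * (t1 + t2 + t3))))
        by (unfold f, D; ring).
      rewrite K1, E1, E2. ring. }
    apply Rmult_integral in K1 as [|K1]; [contradiction|].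
    apply Rmult_integral in K2 as [|K2]; [contradiction|].
    apply Rmult_integral in K2 as [Hb|K2]; [|lra].
    exfalso. apply Hn. subst b. assert (a = 0) by lra. subst a.
    unfold f in E1. repeat split; lra.
  - intro He2. set (e1 := t1 + t2 + t3). set (e3 := t1 * t2 * t3).
    exists (- e1), 1, (e1 - e3).
    assert (G : forall t, on_line (- e1) 1 (e1 - e3) (curve_pt t)
                          <-> (t - t1) * (t - t2) * (t - t3) = 0).
    { intro t. rewrite on_line_curve_pt.
      replace (1 * t ^ 3 + - e1 * t ^ 2 + 1 * t + (- e1 + (e1 - e3)))
        with ((t - t1) * (t - t2) * (t - t3)
              + t * (1 - (t1 * t2 + t1 * t3 + t2 * t3))) by (unfold e1, e3; ring).
      rewrite He2, Rminus_diag, Rmult_0_r, Rplus_0_r. reflexivity. }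
    rewrite !G. repeat split; try lra; ring.
Qed.

Lemma collinear_O_curve_pt t2 t3 : t2 <> t3 ->
  collinear O (curve_pt t2) (curve_pt t3) <-> t2 + t3 = 0.
Proof.
  intro H23. split.
  - intros (a & b & c & Hn & EO & E2 & E3).
    unfold on_line, hX, hY, hZ in EO. rewrite on_line_curve_pt in E2, E3.
    assert (b = 0) by lra. subst b.
    assert (K : a * ((t2 - t3) * (t2 + t3)) = 0) by lra.
    apply Rmult_integral in K as [Ha|K].
    + exfalso. apply Hn. subst a. repeat split; lra.
    + apply Rmult_integral in K as [|]; lra.
  - intro H. exists 1, 0, (- (t2 ^ 2 + 1)).
    rewrite !on_line_curve_pt. unfold on_line, hX, hY, hZ.
    replace t3 with (- t2) by lra. repeat split; try lra; ring.
Qed.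

Lemma cot_eq_iff a b : sin a <> 0 -> sin b <> 0 ->
  cot a = cot b <-> sin (a - b) = 0.
Proof.
  intros Ha Hb. rewrite sin_minus. unfold cot. split; intro H.
  - apply (f_equal (fun u => u * (sin a * sin b))) in H.
    field_simplify in H; [lra | exact Hb | exact Ha].
  - apply (Rmult_eq_reg_r (sin a * sin b));
      [|apply Rmult_integral_contrapositive_currified; assumption].
    replace (cos a / sin a * (sin a * sin b)) with (cos a * sin b) by (field; exact Ha).
    replace (cos b / sin b * (sin a * sin b)) with (sin a * cos b) by (field; exact Hb).
    lra.
Qed.

Lemma sin_add_cot a b : sin a <> 0 -> sin b <> 0 ->
  sin (a + b) = sin a * sin b * (cot a + cot b).
Proof. intros. rewrite sin_plus. unfold cot. field. auto. Qed.

Lemma sin_add3_cot a b c : sin a <> 0 -> sin b <> 0 -> sin c <> 0 ->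
  sin (a + b + c) =
  sin a * sin b * sin c * (cot a * cot b + cot a * cot c + cot b * cot c - 1).
Proof. intros. rewrite !sin_plus, cos_plus. unfold cot. field. auto. Qed.

Lemma Rmult_eq0_l (u v : R) : u <> 0 -> u * v = 0 <-> v = 0.
Proof.
  intro Hu. split; intro H; [|rewrite H; ring].
  apply Rmult_integral in H as [|]; [contradiction | assumption].
Qed.

Definition isint (x : R) : Prop := exists k : Z, x = IZR k.

Lemma eqZ_isint x y : eqZ x y <-> isint (x - y).
Proof. reflexivity. Qed.

Lemma isint_sin x : isint x <-> sin (PI * x) = 0.
Proof.
  split.
  - intros [k Hk]. apply sin_eq_0_1. exists k. rewrite Hk. ring.
  - intro H. destruct (sin_eq_0_0 _ H) as [k Hk]. exists k.
    apply (Rmult_eq_reg_l PI); [|exact PI_neq0]. rewrite Hk. ring.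
Qed.

Lemma sin_pi_neq0 x : ~ isint x -> sin (PI * x) <> 0.
Proof. intros H E. apply H, isint_sin, E. Qed.

Lemma isint_addl x y : isint x -> isint (x + y) <-> isint y.
Proof.
  intros [k Hk]. split.
  - intros [m Hm]. exists (m - k)%Z. rewrite minus_IZR. lra.
  - intros [m Hm]. exists (k + m)%Z. rewrite plus_IZR. lra.
Qed.

Lemma isint_sub x y : isint x -> isint y -> isint (x - y).
Proof. intros [k Hk] [m Hm]. exists (k - m)%Z. rewrite minus_IZR. lra. Qed.

Lemma isint_0 : isint 0.
Proof. exists 0%Z. reflexivity. Qed.

Lemma cot_pi_eq_iff x y : ~ isint x -> ~ isint y ->
  cot (PI * x) = cot (PI * y) <-> isint (x - y).
Proof.
  intros Hx Hy. rewrite cot_eq_iff by (apply sin_pi_neq0; assumption).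
  rewrite isint_sin, Rmult_minus_distr_l. reflexivity.
Qed.

Lemma isint_add_cot_pi y z : ~ isint y -> ~ isint z ->
  isint (y + z) <-> cot (PI * y) + cot (PI * z) = 0.
Proof.
  intros Hy Hz. pose proof (sin_pi_neq0 _ Hy). pose proof (sin_pi_neq0 _ Hz).
  rewrite isint_sin, Rmult_plus_distr_l, sin_add_cot by assumption.
  apply Rmult_eq0_l, Rmult_integral_contrapositive_currified; assumption.
Qed.

Lemma isint_add3_cot_pi x y z : ~ isint x -> ~ isint y -> ~ isint z ->
  isint (x + y + z) <->
  cot (PI * x) * cot (PI * y) + cot (PI * x) * cot (PI * z)
  + cot (PI * y) * cot (PI * z) = 1.
Proof.
  intros Hx Hy Hz.
  pose proof (sin_pi_neq0 _ Hx). pose proof (sin_pi_neq0 _ Hy).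
  pose proof (sin_pi_neq0 _ Hz).
  rewrite isint_sin, !Rmult_plus_distr_l, sin_add3_cot by assumption.
  rewrite Rmult_eq0_l by (repeat apply Rmult_integral_contrapositive_currified; assumption).
  split; lra.
Qed.

Lemma cot_pi_surj t : exists x, ~ isint x /\ cot (PI * x) = t.
Proof.
  set (x := (PI / 2 - atan t) / PI).
  assert (Ex : PI * x = PI / 2 - atan t) by (unfold x; field; exact PI_neq0).
  assert (Hs : sin (PI * x) <> 0).
  { rewrite Ex, sin_shift. pose proof (atan_bound t).
    assert (0 < cos (atan t)) by (apply cos_gt_0; lra). lra. }
  exists x. split.
  - intro H. apply Hs, isint_sin, H.
  - unfold cot. rewrite Ex, sin_shift, cos_shift. apply tan_atan.
Qed.

Lemma phi_int x : isint x -> phi x = O.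
Proof. intro H. unfold phi. destruct excluded_middle_informative; tauto. Qed.

Lemma phi_nint x : ~ isint x -> phi x = curve_pt (cot (PI * x)).
Proof.
  intro H. unfold phi. destruct excluded_middle_informative; [tauto | reflexivity].
Qed.

Lemma phi_eqZ x y : eqZ x y -> phi x = phi y.
Proof.
  rewrite eqZ_isint. intro Hd. destruct (classic (isint x)) as [Hx|Hx].
  - assert (Hy : isint y).
    { replace y with (x - (x - y)) by ring. apply isint_sub; assumption. }
    rewrite (phi_int _ Hx), (phi_int _ Hy). reflexivity.
  - assert (Hy : ~ isint y).
    { intro Hy. apply Hx. replace x with (y + (x - y)) by ring.
      apply isint_addl; assumption. }
    rewrite (phi_nint _ Hx), (phi_nint _ Hy), (proj2 (cot_pi_eq_iff _ _ Hx Hy) Hd).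
    reflexivity.
Qed.

Lemma phi_in_Gamma x : in_Gamma (phi x).
Proof.
  destruct (classic (isint x)) as [Hx|Hx].
  - rewrite (phi_int _ Hx). exact I.
  - rewrite (phi_nint _ Hx). apply curve_pt_in_Gamma.
Qed.

Lemma phi_inj x y : phi x = phi y -> eqZ x y.
Proof.
  rewrite eqZ_isint. intro E.
  destruct (classic (isint x)) as [Hx|Hx]; destruct (classic (isint y)) as [Hy|Hy].
  - apply isint_sub; assumption.
  - rewrite (phi_int _ Hx), (phi_nint _ Hy) in E. discriminate.
  - rewrite (phi_nint _ Hx), (phi_int _ Hy) in E. discriminate.
  - rewrite (phi_nint _ Hx), (phi_nint _ Hy) in E.
    apply (cot_pi_eq_iff _ _ Hx Hy), curve_pt_inj, E.
Qed.

Lemma phi_surj p : in_Gamma p -> exists x, phi x = p.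
Proof.
  destruct p as [u v|]; intro Hp.
  - destruct (cot_pi_surj (v / u)) as (x & Hx & Ct).
    exists x. rewrite (phi_nint _ Hx), Ct. symmetry. apply Gamma_curve_pt, Hp.
  - exists 0. apply phi_int, isint_0.
Qed.

Lemma cot_pi_neq x y : ~ isint x -> ~ isint y -> ~ eqZ x y ->
  cot (PI * x) <> cot (PI * y).
Proof. intros Hx Hy Hxy E. apply Hxy, (cot_pi_eq_iff _ _ Hx Hy), E. Qed.

Lemma phi_collinear_O x y z : isint x -> ~ eqZ x y -> ~ eqZ x z -> ~ eqZ y z ->
  collinear (phi x) (phi y) (phi z) <-> isint (x + y + z).
Proof.
  intros Hx Hxy Hxz Hyz.
  assert (Hy : ~ isint y) by (intro Hy; apply Hxy, isint_sub; assumption).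
  assert (Hz : ~ isint z) by (intro Hz; apply Hxz, isint_sub; assumption).
  rewrite (phi_int _ Hx), (phi_nint _ Hy), (phi_nint _ Hz),
    collinear_O_curve_pt by (apply cot_pi_neq; assumption).
  rewrite Rplus_assoc, (isint_addl _ _ Hx), isint_add_cot_pi by assumption.
  reflexivity.
Qed.

Lemma phi_collinear_aff x y z : ~ isint x -> ~ isint y -> ~ isint z ->
  ~ eqZ x y -> ~ eqZ x z -> ~ eqZ y z ->
  collinear (phi x) (phi y) (phi z) <-> isint (x + y + z).
Proof.
  intros Hx Hy Hz Hxy Hxz Hyz.
  rewrite (phi_nint _ Hx), (phi_nint _ Hy), (phi_nint _ Hz),
    collinear_curve_pt by (apply cot_pi_neq; assumption).
  rewrite isint_add3_cot_pi by assumption. reflexivity.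
Qed.

Lemma eqZ_sym x y : ~ eqZ x y -> ~ eqZ y x.
Proof.
  intros H E. apply H. rewrite eqZ_isint in *.
  replace (x - y) with (0 - (y - x)) by ring. apply isint_sub; [apply isint_0 | exact E].
Qed.

Lemma phi_collinear x y z : ~ eqZ x y -> ~ eqZ y z -> ~ eqZ x z ->
  collinear (phi x) (phi y) (phi z) <-> eqZ (x + y + z) 0.
Proof.
  intros Hxy Hyz Hxz. rewrite eqZ_isint, Rminus_0_r.
  pose proof (eqZ_sym _ _ Hxy). pose proof (eqZ_sym _ _ Hyz).
  pose proof (eqZ_sym _ _ Hxz).
  destruct (classic (isint x)) as [Hx|Hx]; [apply phi_collinear_O; assumption|].
  destruct (classic (isint y)) as [Hy|Hy].
  { rewrite collinear_swap12, phi_collinear_O by assumption.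
    replace (y + x + z) with (x + y + z) by ring. reflexivity. }
  destruct (classic (isint z)) as [Hz|Hz].
  { rewrite collinear_swap23, collinear_swap12, phi_collinear_O by assumption.
    replace (z + x + y) with (x + y + z) by ring. reflexivity. }
  apply phi_collinear_aff; assumption.
Qed.

Theorem proposition4 :
  (forall x y : R, eqZ x y -> phi x = phi y) /\
  (forall x : R, in_Gamma (phi x)) /\
  (forall x y : R, phi x = phi y -> eqZ x y) /\
  (forall p : pt, in_Gamma p -> exists x : R, phi x = p) /\
  (forall x y z : R, ~ eqZ x y -> ~ eqZ y z -> ~ eqZ x z ->
     (collinear (phi x) (phi y) (phi z) <-> eqZ (x + y + z) 0)).
Proof.
  exact (conj phi_eqZ (conj phi_in_Gamma (conj phi_inj (conj phi_surj phi_collinear)))).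
Qed.
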